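(* Every tOR net is sub-sound.
   Context: Petri nets and markings. A Petri net is a triple $(P,T,F)$ with $P$ a finite set of places, $T$ a finite set of transitions, $P\cap T=\emptyset$, and $F\subseteq (P\times T)\cup(T\times P)$. For a node $x$, $\bullet x=\{y\mid (y,x)\in F\}$, $x\bullet=\{y\mid (x,y)\in F\}$. A marking is a multiset over $P$ (a function $P\to\mathbb N$); sets of places are identified with bags of multiplicity one, $+,-,\le$ are pointwise, and $k.m$ is the sum of $k$ copies of $m$. Transition $t$ is enabled at $m$ iff $\bullet t\le m$, firing gives $m-\bullet t+t\bullet$, and $m\xrightarrow{*}m'$ denotes reachability by a finite (possibly empty) firing sequence. Workflow nets. A pWF net is $(P,T,F,I,O)$ with $(P,T,F)$ a Petri net, $I,O\subseteq P$ non-empty, every node reachable by a directed path from some node of $I$, and some node of $O$ reachable from every node. A tWF net is the same with $I,O$ non-empty subsets of $T$. Input nodes may have incoming edges and output nodes outgoing edges. The place-completion $\mathrm{pc}(N)$ of a tWF net $N=(P,T,F,I,O)$ is obtained by adding two fresh places $p_i,p_o$ with edges $(p_i,t)$ for all $t\in I$ and $(t,p_o)$ for all $t\in O$, and taking input set $\{p_i\}$ and output set $\{p_o\}$. OR nets. An OR net is a (possibly cyclic) WF net such that for every transition $t$: (1) either $t\in I$ and $|\bullet t|=0$, or $t\notin I$ and $|\bullet t|=1$; and (2) either $t\in O$ and $|t\bullet|=0$, or $t\notin O$ and $|t\bullet|=1$. A tOR net is an OR net that is a tWF net. Sub-soundness. A pWF net is sub-sound if for all integers $k\ge k'\ge 0$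 and every marking $m'$: if $k.I\xrightarrow{*}m'+k'.O$ then $m'\xrightarrow{*}(k-k').O$. A tWF net is sub-sound iff its place-completion is. *)

From mathcomp Require Import all_boot.
Set Implicit Arguments. Unset Strict Implicit. Unset Printing Implicit Defensive.

(* A Petri net (P,T,F) with P, T finite (disjoint since they are distinct
   types); the flow relation F is split as
     pre p t  <->  (p,t) \in F        post t p  <->  (t,p) \in F. *)

Section Nets.
Variables (P T : finType) (pre : P -> T -> bool) (post : T -> P -> bool).

Definition marking := {ffun P -> nat}.

Definition madd (m1 m2 : marking) : marking := [ffun p => m1 p + m2 p].
Definition kset (k : nat) (S : {set P}) : marking := [ffun p => k * (p \in S)].

Definition enabled (t : T) (m : marking) : bool := [forall p, pre p t <= m p].
Definition fire (t : T) (m : marking) : marking :=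
  [ffun p => m p - pre p t + post t p].

Inductive reach : marking -> marking -> Prop :=
| reach_refl m : reach m m
| reach_step m t m' : enabled t m -> reach (fire t m) m' -> reach m m'.

Definition flow (x y : P + T) : bool :=
  match x, y with
  | inl p, inr t => pre p t
  | inr t, inl p => post t p
  | _, _ => false
  end.

Definition tWF (I O : {set T}) : Prop :=
  [/\ I != set0, O != set0,
      (forall x : P + T, exists2 i, i \in I & connect flow (inr i) x) &
      (forall x : P + T, exists2 o, o \in O & connect flow x (inr o))].

Definition preset (t : T) : {set P} := [set p | pre p t].
Definition postset (t : T) : {set P} := [set p | post t p].

Definition isOR (I O : {set T}) : Prop :=
  forall t : T,
    ((t \in I) /\ #|preset t| = 0 \/ (t \notin I) /\ #|preset t| = 1) /\
    ((t \in O) /\ #|postset t| = 0 \/ (t \notin O) /\ #|postset t| = 1).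

Definition tOR (I O : {set T}) : Prop := tWF I O /\ isOR I O.

Definition subsound (I O : {set P}) : Prop :=
  forall (k k' : nat) (m' : marking), k' <= k ->
    reach (kset k I) (madd m' (kset k' O)) ->
    reach m' (kset (k - k') O).

End Nets.

(* Place completion: places P + bool, with p_i := inr true, p_o := inr false. *)
Section PC.
Variables (P T : finType) (pre : P -> T -> bool) (post : T -> P -> bool)
          (I O : {set T}).

Definition pc_pre (x : P + bool) (t : T) : bool :=
  match x with
  | inl p => pre p t
  | inr true => t \in I
  | inr false => false
  end.

Definition pc_post (t : T) (x : P + bool) : bool :=
  match x with
  | inl p => post t p
  | inr true => false
  | inr false => t \in O
  end.

Definition pc_I : {set P + bool} := [set inr true].
Definition pc_O : {set P + bool} := [set inr false].

(* A tWF net is sub-sound iff its place-completion is. *)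
Definition tsubsound : Prop := subsound pc_pre pc_post pc_I pc_O.
End PC.

From mathcomp Require Import all_boot.
From mathcomp Require Import zify.
Set Implicit Arguments. Unset Strict Implicit. Unset Printing Implicit Defensive.

(* In the place-completion pc(N) of an OR net every transition has exactly one
   input place and exactly one output place (the fresh place p_i, resp. p_o,
   for input, resp. output, transitions).  Such a "state machine" net behaves
   like independent tokens moving along arcs:
   - firing conserves the total number of tokens, so k.p_i ->* m' + k'.p_o
     forces |m'| = k - k';
   - by monotonicity of firing, if every single token can be moved to p_o
     then every marking m reaches |m|.p_o.
   Finally a single token on any place drains to p_o: by the tWF condition
   every node has a flow path to an output transition, and walking a token
   backwards along such a path shows it reaches p_o; a token on p_i first
   moves through some input transition. *)

Section Markings.
Variable Q : finType.

Definition unitm (x : Q) : marking Q := [ffun y => nat_of_bool (y == x)].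

Definition msize (m : marking Q) : nat := \sum_y m y.

Definition mdel (m : marking Q) (x : Q) : marking Q := [ffun y => m y - (y == x)].

Lemma madd_comm (a b : marking Q) : madd a b = madd b a.
Proof. by apply/ffunP=> y; rewrite !ffunE addnC. Qed.

Lemma msize_madd (a b : marking Q) : msize (madd a b) = msize a + msize b.
Proof. by rewrite /msize -big_split; apply: eq_bigr => y _; rewrite ffunE. Qed.

Lemma msize_unitm (x : Q) : msize (unitm x) = 1.
Proof.
rewrite /msize (bigD1 x) //= ffunE eqxx big1 // => y /negbTE yx.
by rewrite ffunE yx.
Qed.

Lemma mdelK (m : marking Q) (x : Q) : 0 < m x -> madd (mdel m x) (unitm x) = m.
Proof.
move=> mx; apply/ffunP=> y; rewrite !ffunE.
by case: (eqVneq y x) => [->|] /=; lia.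
Qed.

Lemma kset1S (x : Q) (s : nat) :
  kset s.+1 [set x] = madd (kset s [set x]) (unitm x).
Proof. by apply/ffunP=> y; rewrite !ffunE in_set1; case: (y == x) => /=; lia. Qed.

Lemma msize_kset1 (x : Q) (s : nat) : msize (kset s [set x]) = s.
Proof.
elim: s => [|s IH]; last by rewrite kset1S msize_madd IH msize_unitm addn1.
by rewrite /msize big1 // => y _; rewrite ffunE.
Qed.

Lemma msize_eq0 (m : marking Q) (S : {set Q}) : msize m = 0 -> m = kset 0 S.
Proof.
move=> m0; apply/ffunP=> y; rewrite ffunE.
by move: m0; rewrite /msize (bigD1 y) //=; lia.
Qed.

Lemma msize_eqS (m : marking Q) (s : nat) : msize m = s.+1 ->
  exists x m0, m = madd m0 (unitm x) /\ msize m0 = s.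
Proof.
case: (pickP (fun y => 0 < m y)) => [x mx|m0] ms; last first.
  by move: ms; rewrite /msize big1 // => y _; move: (m0 y) => /=; case: (m y).
exists x, (mdel m x); rewrite mdelK //; split=> //.
by apply/eqP; rewrite -eqSS -ms -{2}(mdelK mx) msize_madd msize_unitm addn1.
Qed.

End Markings.

Section Reachability.
Variables (Q T : finType) (pr : Q -> T -> bool) (po : T -> Q -> bool).

Lemma reach_trans (m1 m2 m3 : marking Q) :
  reach pr po m1 m2 -> reach pr po m2 m3 -> reach pr po m1 m3.
Proof. by elim=> [//|m t m' en _ IH] r23; apply: reach_step en (IH r23). Qed.

(* Monotonicity: extra tokens never disable a firing sequence. *)
Lemma reach_madd (m1 m2 n : marking Q) :
  reach pr po m1 m2 -> reach pr po (madd m1 n) (madd m2 n).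
Proof.
elim=> [m|m t m' en _ IH]; first exact: reach_refl.
have en' : enabled pr t (madd m n).
  apply/forallP=> p; rewrite ffunE; apply: leq_trans (leq_addr _ _).
  exact: (forallP en p).
apply: reach_step en' _.
suff -> : fire pr po t (madd m n) = madd (fire pr po t m) n by [].
apply/ffunP=> p; rewrite !ffunE.
by have := forallP en p; case: (pr p t) => /=; lia.
Qed.

Lemma reach_collect (z : Q) :
  (forall x, reach pr po (unitm x) (unitm z)) ->
  forall m, reach pr po m (kset (msize m) [set z]).
Proof.
move=> drain m; have [s ms] : {s | msize m = s} by exists (msize m).
rewrite ms; elim: s m ms => [|s IH] m ms.
  by rewrite {1}(msize_eq0 [set z] ms); apply: reach_refl.
have [x [m0 [-> m0s]]] := msize_eqS ms.
apply: reach_trans (reach_madd (unitm x) (IH m0 m0s)) _.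
rewrite kset1S madd_comm [madd _ (unitm z)]madd_comm.
exact: reach_madd (drain x).
Qed.

Definition unique_arc (a : Q -> bool) (s : Q) : Prop := forall y, a y = (y == s).

Definition state_machine : Prop :=
  forall t, (exists s, unique_arc (pr^~ t) s) /\ (exists d, unique_arc (po t) d).

Section OneTransition.
Variables (t : T) (s d : Q).
Hypotheses (src : unique_arc (pr^~ t) s) (dst : unique_arc (po t) d).

Lemma fire_move (m : marking Q) :
  enabled pr t (madd m (unitm s)) /\
  fire pr po t (madd m (unitm s)) = madd m (unitm d).
Proof.
split; first by apply/forallP=> y; rewrite !ffunE src leq_addl.
by apply/ffunP=> y; rewrite !ffunE src dst addnK.
Qed.

Lemma reach_move : reach pr po (unitm s) (unitm d).
Proof.
have [en fm] := fire_move [ffun=> 0].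
have e0 x : madd [ffun=> 0] (unitm x) = unitm x by apply/ffunP=> y; rewrite !ffunE.
by rewrite !e0 in en fm; apply: reach_step en _; rewrite fm; apply: reach_refl.
Qed.

End OneTransition.

Lemma msize_reach : state_machine ->
  forall m1 m2, reach pr po m1 m2 -> msize m1 = msize m2.
Proof.
move=> sm m1 m2; elim=> [//|m t m' en _ IH]; rewrite -IH.
have [[s src] [d dst]] := sm t.
have ms : 0 < m s by have := forallP en s; rewrite src eqxx.
rewrite -(mdelK ms); have [_ ->] := fire_move src dst (mdel m s).
by rewrite !msize_madd !msize_unitm.
Qed.

End Reachability.

Lemma connect_back_closed (V : finType) (e : rel V) (A : V -> Prop) (x y : V) :
  (forall u v, e u v -> A v -> A u) -> connect e x y -> A y -> A x.
Proof.
move=> back /connectP [p xp ->] {y}.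
by elim: p x xp => [//|v p IH] x /= /andP [xv vp] Ap; apply: back xv (IH v vp Ap).
Qed.

Section PlaceCompletion.
Variables (P T : finType) (pre : P -> T -> bool) (post : T -> P -> bool)
          (I O : {set T}).

Local Notation pcpre := (pc_pre pre I).
Local Notation pcpost := (pc_post post O).
Local Notation pc_reach := (reach pcpre pcpost).
Local Notation p_i := (inr true : P + bool).
Local Notation p_o := (inr false : P + bool).

(* An arc predicate of pc(N): the original arcs plus, when c holds, an arc
   to the fresh place inr z.  The OR condition makes it select one place. *)
Lemma unique_completed_arc (A : {set P}) (c z : bool) :
  c /\ #|A| = 0 \/ ~~ c /\ #|A| = 1 ->
  exists s, unique_arc (fun x : P + bool =>
    match x with inl p => p \in A | inr b => c && (b == z) end) s.
Proof.
case=> [[-> /eqP]|[/negbTE -> /eqP /cards1P [q ->]]].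
  rewrite cards_eq0 => /eqP ->; exists (inr z).
  by case=> [p|b]; rewrite ?in_set0 //=; case: b z => -[].
by exists (inl q); case=> [p|b]; rewrite ?in_set1.
Qed.

Lemma pc_state_machine : isOR pre post I O -> state_machine pcpre pcpost.
Proof.
move=> OR t; have [src dst] := OR t; split.
- have [s arc] := unique_completed_arc true src.
  by exists s; case=> [p|b]; rewrite -arc /= ?inE // andbC; case: b.
- have [d arc] := unique_completed_arc false dst.
  by exists d; case=> [p|b]; rewrite -arc /= ?inE // andbC; case: b.
Qed.

Hypothesis OR : isOR pre post I O.

Definition drains (x : P + bool) : Prop := pc_reach (unitm x) (unitm p_o).

Definition drains_node (u : P + T) : Prop :=
  match u with
  | inl p => drains (inl p)
  | inr t => forall d, unique_arc (pcpost t) d -> drains d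
  end.

Lemma drains_output (o : T) : o \in O -> drains_node (inr o).
Proof.
move=> oO d dst; have := dst p_o; rewrite /= oO => /esym /eqP <-.
exact: reach_refl.
Qed.

Lemma drains_flow_back (u v : P + T) :
  flow pre post u v -> drains_node v -> drains_node u.
Proof.
case: u => [p|t]; case: v => [q|t'] //= arc dv.
- have [[s src] [d dst]] := pc_state_machine OR t'.
  have := src (inl p); rewrite /= arc => /esym /eqP sp; subst s.
  exact: reach_trans (reach_move src dst) (dv d dst).
- by move=> d dst; have := dst (inl q); rewrite /= arc => /esym /eqP <-.
Qed.

Lemma drains_all : tWF pre post I O -> forall x, drains x.
Proof.
case=> I0 _ _ toO.
have place p : drains (inl p).
  have [o oO conn] := toO (inl p).
  exact: (connect_back_closed (A := drains_node) drains_flow_back conn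
           (drains_output oO)).
case=> [p|[]]; [exact: place | | exact: reach_refl].
have [i iI] := set0Pn _ I0; have [[s src] [d dst]] := pc_state_machine OR i.
have := src p_i; rewrite /= iI => /esym /eqP si; subst s.
apply: reach_trans (reach_move src dst) _.
case: d dst => [p|[]] dst; [exact: place | | exact: reach_refl].
by have := dst p_i; rewrite /= eqxx.
Qed.

End PlaceCompletion.

Theorem mainTheorem17 (P T : finType) (pre : P -> T -> bool)
    (post : T -> P -> bool) (I O : {set T}) :
  tOR pre post I O -> tsubsound pre post I O.
Proof.
move=> [wf OR] k k' m' le_k'k run.
have conserved := msize_reach (pc_state_machine OR) run.
rewrite msize_madd /pc_I /pc_O !msize_kset1 in conserved.
have -> : k - k' = msize m' by lia.
exact: reach_collect (drains_all OR wf) m'.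
Qed.
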